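(* Let $\Sigma=\{\sigma_0,\sigma_1,\sigma_2\}$ and consider two users with confusion graphs $G_1=(\Sigma,\{\sigma_0\sigma_1,\sigma_0\sigma_2\})$ and an arbitrary graph $G_2$ on $\Sigma$. Then the rate vectors $(\alpha\log_2 c(G_1),(1-\alpha)\log_2 c(G_2))$, $\alpha\in[0,1]$, where $\log_2 c(G_1)=1$, are feasible, and every feasible rate vector $(R_1,R_2)$ satisfies $R_1\leq\alpha$ and $R_2\leq(1-\alpha)\log_2 c(G_2)$ for some $\alpha\in[0,1]$; i.e. the optimal rate vectors are exactly those given by time sharing between the single-user schemes.
   Context: Setting: a sender broadcasts a word of length $n$ over a finite alphabet $\Sigma$ to $r$ users; user $i$ has a confusion graph $G_i$ on vertex set $\Sigma$, where $ab$ is an edge iff user $i$ cannot distinguish letters $a$ and $b$. Two words $x,y\in\Sigma^n$ are distinguishable by user $i$ if there is a coordinate $t$ with $x_t\neq y_t$ and $x_ty_t$ not an edge of $G_i$. A vector $(m_1,\ldots,m_r)$ of positive integers is feasible for length $n$ if there is a map $E:[m_1]\times\cdots\times[m_r]\to\Sigma^n$ such that for every $i$ and all tuples $a,a'$ with $a_i\neq a'_i$, $E(a)$ and $E(a')$ are distinguishable by user $i$. A rate vector is feasible if there is a sequence of feasible vectors for lengths $n\to\infty$ with $R_i=\lim_{n\to\infty}\frac{\log_2 m_i^{(n)}}{n}$. The Shannon capacity is $c(G)=\lim_{n\to\infty}\alpha(G^n)^{1/n}$ with $G^n$ the strong power. A rate vector is optimal if it is feasible and no user can increase his rate while the other keeps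 the same rate. *)

From HB Require Import structures.
From mathcomp Require Import all_boot all_order all_algebra.
From mathcomp Require Import all_classical all_reals all_analysis.
Set Implicit Arguments. Unset Strict Implicit. Unset Printing Implicit Defensive.
Import Order.TTheory GRing.Theory Num.Theory.
Import numFieldNormedType.Exports.
Local Open Scope classical_set_scope.
Local Open Scope ring_scope.

(* A (confusion) graph on the alphabet [Sigma] is a relation [G : rel Sigma];
   [G a b] means the user cannot distinguish letters [a] and [b]. *)
Definition simple_graph (Sigma : finType) (G : rel Sigma) : Prop :=
  symmetric G /\ irreflexive G.

Definition distinguishable (Sigma : finType) (G : rel Sigma) (n : nat)
  (x y : n.-tuple Sigma) : bool :=
  [exists t : 'I_n, (tnth x t != tnth y t) && ~~ G (tnth x t) (tnth y t)].

(* Independent sets in the strong power G^n: pairwise distinct words of S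
   are pairwise non-adjacent in G^n, i.e. distinguishable. *)
Definition strong_power_indep (Sigma : finType) (G : rel Sigma) (n : nat)
  (S : {set n.-tuple Sigma}) : bool :=
  [forall x in S, forall y in S, (x != y) ==> distinguishable G x y].

Definition alpha_pow (Sigma : finType) (G : rel Sigma) (n : nat) : nat :=
  \max_(S : {set n.-tuple Sigma} | strong_power_indep G S) #|S|.

Definition shannon_capacity (R : realType) (Sigma : finType) (G : rel Sigma) : R :=
  limn (fun n : nat => powR ((alpha_pow G n)%:R : R) (n%:R^-1)).

Definition log2 (R : realType) (x : R) : R := ln x / ln 2.

Definition feasible_vec (Sigma : finType) (G1 G2 : rel Sigma) (n m1 m2 : nat) : Prop :=
  (0 < m1)%N /\ (0 < m2)%N /\
  exists E : 'I_m1 * 'I_m2 -> n.-tuple Sigma,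
    forall a a' : 'I_m1 * 'I_m2,
      (a.1 != a'.1 -> distinguishable G1 (E a) (E a')) /\
      (a.2 != a'.2 -> distinguishable G2 (E a) (E a')).

Definition feasible_rate (R : realType) (Sigma : finType) (G1 G2 : rel Sigma)
  (R1 R2 : R) : Prop :=
  exists m1 m2 : nat -> nat,
    (forall n, feasible_vec G1 G2 n (m1 n) (m2 n)) /\
    (fun n : nat => log2 ((m1 n)%:R : R) / n%:R) @ \oo --> R1 /\
    (fun n : nat => log2 ((m2 n)%:R : R) / n%:R) @ \oo --> R2.

Definition G1_star : rel 'I_3 :=
  fun a b => ((nat_of_ord a == 0%N) && (nat_of_ord b != 0%N))
          || ((nat_of_ord b == 0%N) && (nat_of_ord a != 0%N)).

From HB Require Import structures.
From mathcomp Require Import all_boot all_order all_algebra.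
From mathcomp Require Import all_classical all_reals all_analysis.
From mathcomp Require Import ring lra.
Import Order.TTheory GRing.Theory Num.Theory.
Import numFieldNormedType.Exports.
Set Implicit Arguments. Unset Strict Implicit. Unset Printing Implicit Defensive.
Local Open Scope ring_scope.

(* Achievability is time sharing between single-user codes built from
   independent sets: on three letters every simple graph has a clique cover
   and an independent set of the same size (1, 2 or 3), so [c(G1) = 2] and
   [c(G2)] is the independence number of [G2].
   For the converse, send a ternary word [w] to the subcube of [{0,1}^n] of
   the binary words agreeing with [w] ([sigma1 |-> 0], [sigma2 |-> 1]) off
   the zeros of [w]. Codewords for different first messages differ at a
   position carrying [sigma1] in one and [sigma2] in the other, so the unions
   [U_i] of the cubes of the rows of a code are disjoint and
   [\sum_i |U_i| <= 2 ^ n]. If [G2] is empty, a row of [m2] distinct words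
   with all cubes inside [U_i] has [m2 <= |U_i| ^ log2 3], whence
   [log2 3 * R1 + R2 <= log2 3]. If [G2] is neither empty nor complete, some
   letter [q] lies on every non-edge of [G2]. For [q = sigma1, sigma2]
   distinct codewords then have distinct patterns of [q]; for [q = sigma0]
   the words of a row have distinct zero patterns, which forces
   [m2 <= |U_i|]. Either way [m1 * m2 <= 2 ^ n], i.e. [R1 + R2 <= 1].
   If [G2] is complete, [m2 = 1]. *)

Definition sigma0 : 'I_3 := @Ordinal 3 0 isT.
Definition sigma1 : 'I_3 := @Ordinal 3 1 isT.
Definition sigma2 : 'I_3 := @Ordinal 3 2 isT.

Lemma ord3P (x : 'I_3) : [\/ x = sigma0, x = sigma1 | x = sigma2].
Proof.
case: x => [[|[|[|m]]] lt_x3] //.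
- by apply: Or31; apply: val_inj.
- by apply: Or32; apply: val_inj.
- by apply: Or33; apply: val_inj.
Qed.

Lemma sum_ord3 (f : 'I_3 -> nat) :
  (\sum_(x : 'I_3) f x = f sigma0 + f sigma1 + f sigma2)%N.
Proof.
rewrite !big_ord_recr big_ord0 /= add0n.
by congr (_ + _ + _)%N; congr f; apply: val_inj.
Qed.

Definition separated (T : eqType) (G : rel T) (x y : T) : bool :=
  (x != y) && ~~ G x y.

Lemma separatedC (T : eqType) (G : rel T) : symmetric G -> symmetric (separated G).
Proof. by move=> G_sym x y; rewrite /separated eq_sym G_sym. Qed.

Lemma distinguishableP (T : finType) (G : rel T) n (x y : n.-tuple T) :
  reflect (exists t, separated G (tnth x t) (tnth y t)) (distinguishable G x y).
Proof. exact: existsP. Qed.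

Section CliqueCover.
Variables (T K : finType) (G : rel T) (kappa : T -> K) (iota : K -> T).
Hypothesis kappa_clique : forall x y, kappa x = kappa y -> x = y \/ G x y.
Hypothesis iota_indep : forall i j, i != j -> separated G (iota i) (iota j).

Lemma alpha_pow_clique_cover n : alpha_pow G n = (#|K| ^ n)%N.
Proof.
apply/eqP; rewrite eqn_leq; apply/andP; split.
  apply/bigmax_leqP => S indepS.
  have kappa_inj : {in S &, injective (fun w : n.-tuple T => map_tuple kappa w)}.
    move=> w w' wS w'S kww'; apply/eqP/negPn/negP => neq_ww'.
    have /distinguishableP[t /andP[neq_t nG_t]] :=
      implyP (forall_inP (forall_inP indepS w wS) w' w'S) neq_ww'.
    have /(congr1 (fun u => tnth u t)) := kww'.
    rewrite !tnth_map => /kappa_clique[eq_t|G_t].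
      by rewrite eq_t eqxx in neq_t.
    by rewrite G_t in nG_t.
  by rewrite -(card_in_imset kappa_inj) -card_tuple max_card.
have iota_inj : injective iota.
  by move=> i j eq_ij; apply/eqP/negPn/negP => /iota_indep/andP[]; rewrite eq_ij eqxx.
have map_iota_inj : injective (fun u : n.-tuple K => map_tuple iota u).
  move=> u u' eq_uu'; apply/eq_from_tnth => t.
  by have := congr1 (fun v => tnth v t) eq_uu'; rewrite !tnth_map => /iota_inj.
rewrite -card_tuple -(card_imset _ map_iota_inj).
apply: leq_bigmax_cond; apply/forall_inP => _ /imsetP[u _ ->].
apply/forall_inP => _ /imsetP[u' _ ->]; apply/implyP => neq_uu'.
have : u != u' by apply: contraNneq neq_uu' => ->.
rewrite eqEtuple negb_forall => /existsP[t neq_t].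
by apply/distinguishableP; exists t; rewrite !tnth_map; apply: iota_indep.
Qed.

Lemma shannon_capacity_clique_cover (R : realType) :
  (0 < #|K|)%N -> shannon_capacity R G = #|K|%:R.
Proof.
move=> K_gt0; apply: cvg_lim => //; apply: cvg_near_cst; near=> n.
have n_gt0 : (0 < n)%N by near: n; exists 1%N.
rewrite alpha_pow_clique_cover natrX -powR_mulrn ?ler0n // -powRrM.
by rewrite mulfV ?powRr1 ?ler0n // pnatr_eq0 -lt0n.
Unshelve. all: by end_near.
Qed.

End CliqueCover.

Lemma card_le_letter_pattern (T D : finType) n (q : T) (W : D -> n.-tuple T) :
  (forall x y, x != y -> exists t, (tnth (W x) t == q) != (tnth (W y) t == q)) ->
  (#|D| <= 2 ^ n)%N.
Proof.
move=> W_sep; pose pattern x := map_tuple (eq_op^~ q) (W x).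
have pattern_inj : injective pattern.
  move=> x y eq_xy; apply/eqP/negPn/negP => /W_sep[t].
  by have := congr1 (fun v => tnth v t) eq_xy; rewrite !tnth_map => ->; rewrite eqxx.
by have := leq_card _ pattern_inj; rewrite card_tuple card_bool.
Qed.

Lemma G1_separated_nonzero x y :
  separated G1_star x y -> (x != sigma0) && (y != sigma0).
Proof. by case: (ord3P x) => ->; case: (ord3P y) => ->. Qed.

Lemma G1_separated_pattern q x y : q != sigma0 ->
  separated G1_star x y -> (x == q) != (y == q).
Proof.
by case: (ord3P q) => -> //; case: (ord3P x) => ->; case: (ord3P y) => ->.
Qed.

Definition letter (b : bool) : 'I_3 := if b then sigma2 else sigma1.

Lemma letter_separated b b' : b != b' -> separated G1_star (letter b) (letter b').
Proof. by case: b; case: b'. Qed.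

Lemma G1_clique_cover x y : (x == sigma2) = (y == sigma2) -> x = y \/ G1_star x y.
Proof. by case: (ord3P x) => ->; case: (ord3P y) => ->; by [left | right]. Qed.

(* The [p] with [in_cube p w] form a subcube of [{0,1}^n] whose free
   coordinates are the zeros of [w]. *)
Definition in_cube n (p : n.-tuple bool) (w : n.-tuple 'I_3) : bool :=
  all2 (fun b x => (x == sigma0) || (x == letter b)) p w.

Lemma in_cubeP n (p : n.-tuple bool) (w : n.-tuple 'I_3) :
  in_cube p w -> forall t, (tnth w t == sigma0) || (tnth w t == letter (tnth p t)).
Proof.
rewrite /in_cube all2E => /andP[_ /(all_nthP (false, sigma0)) in_p] t.
have := in_p t; rewrite size_zip !size_tuple minnn ltn_ord => /(_ isT).
by rewrite nth_zip ?size_tuple //= -(tnth_nth false) -(tnth_nth sigma0).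
Qed.

Lemma in_cube_cons n b x (p : n.-tuple bool) (w : n.-tuple 'I_3) :
  in_cube [tuple of b :: p] [tuple of x :: w] =
  ((x == sigma0) || (x == letter b)) && in_cube p w.
Proof. by []. Qed.

Definition cube_interior n (U : {set n.-tuple bool}) : {set n.-tuple 'I_3} :=
  [set w | [forall p, in_cube p w ==> (p \in U)]].

Definition zero_pattern n (w : n.-tuple 'I_3) : n.-tuple bool :=
  map_tuple (eq_op^~ sigma0) w.

Lemma zero_pattern_cons n x (w : n.-tuple 'I_3) :
  zero_pattern [tuple of x :: w] = [tuple of (x == sigma0) :: zero_pattern w].
Proof. exact: val_inj. Qed.

Definition slice (T : finType) n (x : T) (A : {set n.+1.-tuple T}) :
  {set n.-tuple T} := [set w : n.-tuple T | [tuple of x :: w] \in A].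

Lemma card_slices (T : finType) n (A : {set n.+1.-tuple T}) :
  #|A| = (\sum_(x : T) #|slice x A|)%N.
Proof.
have cons_bij : bijective (fun p : T * n.-tuple T => [tuple of p.1 :: p.2]).
  exists (fun w => (thead w, [tuple of behead w])).
  - by move=> [x w] /=; rewrite theadE; congr pair; apply: val_inj.
  - by move=> w /=; rewrite -tuple_eta.
rewrite -sum1_card (reindex _ (onW_bij _ cons_bij)) /=.
rewrite -(pair_big_dep xpredT (fun x (w : n.-tuple T) => [tuple of x :: w] \in A)
  (fun _ _ => 1%N)) /=.
by apply: eq_bigr => x _; rewrite sum1dep_card cardsE.
Qed.

Lemma slice_sub_cube_interior n x b (U : {set n.+1.-tuple bool})
    (F : {set n.+1.-tuple 'I_3}) :
  F \subset cube_interior U -> (x == sigma0) || (x == letter b) ->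
  slice x F \subset cube_interior (slice b U).
Proof.
move=> /fintype.subsetP sub_FU x_b; apply/fintype.subsetP => w; rewrite inE => /sub_FU.
rewrite !inE => /forallP in_U; apply/forall_inP => p p_w.
by rewrite inE; apply: (implyP (in_U _)); rewrite in_cube_cons x_b.
Qed.

Section SplitByPredicate.
Variables (aT rT : finType) (f : aT -> rT) (P : {pred rT}) (A A' : {set aT}).
Hypotheses (fA : {in A, forall x, f x \in P}) (fA' : {in A', forall x, f x \notin P}).

Lemma cardsU_split_pred : #|A :|: A'| = (#|A| + #|A'|)%N.
Proof.
apply/eqP; rewrite (leq_card_setU A A'); apply/pred0P => x /=.
by apply/andP => -[/fA fx /fA']; rewrite fx.
Qed.

Lemma in_setU_split_pred_inj :
  {in A &, injective f} -> {in A' &, injective f} -> {in A :|: A' &, injective f}.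
Proof.
move=> injA injA' x y /setUP[xA|xA'] /setUP[yA|yA'] fxy.
- exact: injA.
- by have := fA' yA'; rewrite -fxy fA.
- by have := fA' xA'; rewrite fxy fA.
- exact: injA'.
Qed.

End SplitByPredicate.

(* Induction on the first letter: a word starting with [sigma0] joins the
   words starting with [sigma2] if its zero pattern is already taken by a word
   starting with [sigma1], and joins the latter otherwise. *)
Lemma card_le_cube_interior n (U : {set n.-tuple bool}) (F : {set n.-tuple 'I_3}) :
  F \subset cube_interior U -> {in F &, injective (@zero_pattern n)} ->
  (#|F| <= #|U|)%N.
Proof.
elim: n U F => [|n IHn] U F sub_FU zp_inj.
  have [-> | [w wF]] := set_0Vmem F; first by rewrite cards0.
  have U_nil : [tuple] \in U.
    have := fintype.subsetP sub_FU w wF.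
    by rewrite inE (tuple0 w) => /forallP/(_ [tuple])/implyP/(_ isT).
  rewrite (leq_trans (max_card _)) // card_tuple.
  by apply/card_gt0P; exists [tuple].
pose F_ x := slice x F; pose Z := @zero_pattern n @: F_ sigma1.
have cons_zp_inj x y w w' : w \in F_ x -> w' \in F_ y ->
    (x == sigma0) = (y == sigma0) -> zero_pattern w = zero_pattern w' -> x = y /\ w = w'.
  rewrite !inE => wF w'F eq_xy eq_zp.
  have := zp_inj _ _ wF w'F; rewrite !zero_pattern_cons eq_xy eq_zp => /(_ erefl).
  by move=> /(congr1 val) [-> /val_inj].
have zp_slice_inj x : {in F_ x &, injective (@zero_pattern n)}.
  by move=> w w' wF w'F /(cons_zp_inj _ _ _ _ wF w'F erefl)[].
have F_sub x b : (x == sigma0) || (x == letter b) ->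
    F_ x \subset cube_interior (slice b U).
  exact: slice_sub_cube_interior.
pose B := @zero_pattern n @^-1: Z.
have F1_Z w : w \in F_ sigma1 -> zero_pattern w \in Z by exact: imset_f.
have F2_Z w : w \in F_ sigma2 -> zero_pattern w \notin Z.
  move=> wF; apply/imsetP => -[v vF /(cons_zp_inj _ _ _ _ wF vF erefl)[]].
  by move/(congr1 val).
have F0B_Z w : w \in F_ sigma0 :&: B -> zero_pattern w \in Z.
  by rewrite !inE => /andP[].
have F0notB_Z w : w \in F_ sigma0 :\: B -> zero_pattern w \notin Z.
  by rewrite !inE => /andP[].
have le1 : (#|F_ sigma1 :|: (F_ sigma0 :\: B)| <= #|slice false U|)%N.
  apply: IHn.
    by rewrite finset.subUset F_sub // (fintype.subset_trans (subsetDl _ _)) ?F_sub.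
  apply: in_setU_split_pred_inj F1_Z F0notB_Z (zp_slice_inj _) _.
  by apply: sub_in2 (zp_slice_inj sigma0) => w /setDP[].
have le2 : (#|(F_ sigma0 :&: B) :|: F_ sigma2| <= #|slice true U|)%N.
  apply: IHn.
    by rewrite finset.subUset F_sub // (fintype.subset_trans (subsetIl _ _)) ?F_sub.
  apply: in_setU_split_pred_inj F0B_Z F2_Z _ (zp_slice_inj _).
  by apply: sub_in2 (zp_slice_inj sigma0) => w /setIP[].
rewrite (cardsU_split_pred F1_Z F0notB_Z) in le1.
rewrite (cardsU_split_pred F0B_Z F2_Z) in le2.
rewrite (card_slices F) (card_slices U) sum_ord3 big_bool -(cardsID B (F_ sigma0)).
by apply: leq_trans (leq_add le2 le1); apply: eq_leq; ring.
Qed.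

Section CodeRows.
Variables (G2 : rel 'I_3) (n m1 m2 : nat) (E : 'I_m1 * 'I_m2 -> n.-tuple 'I_3).
Hypothesis E_user1 : forall a a', a.1 != a'.1 -> distinguishable G1_star (E a) (E a').
Hypothesis E_user2 : forall a a', a.2 != a'.2 -> distinguishable G2 (E a) (E a').

Definition code_row (i : 'I_m1) : {set n.-tuple 'I_3} := [set E (i, j) | j : 'I_m2].

Definition row_cubes (i : 'I_m1) : {set n.-tuple bool} :=
  [set p | [exists j, in_cube p (E (i, j))]].

Lemma code_row_inj i : injective (fun j => E (i, j)).
Proof.
move=> j j' eq_E; apply/eqP/negPn/negP => /(@E_user2 (i, j) (i, j')).
by case/distinguishableP => t /andP[]; rewrite /= eq_E eqxx.
Qed.

Lemma card_code_row i : #|code_row i| = m2.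
Proof. by rewrite card_imset ?card_ord //; exact: code_row_inj. Qed.

Lemma code_row_sub_cube_interior i : code_row i \subset cube_interior (row_cubes i).
Proof.
apply/fintype.subsetP => _ /imsetP[j _ ->]; rewrite inE.
by apply/forall_inP => p p_E; rewrite inE; apply/existsP; exists j.
Qed.

(* Codewords with different first messages differ at a position carrying
   [sigma1] in one and [sigma2] in the other, so their cubes are disjoint. *)
Lemma sum_card_row_cubes : (\sum_(i < m1) #|row_cubes i| <= 2 ^ n)%N.
Proof.
have card_sum i : #|row_cubes i| = (\sum_(p : n.-tuple bool) (p \in row_cubes i))%N.
  by rewrite -sum1_card big_mkcond; apply: eq_bigr => p _; case: (_ \in _).
rewrite (eq_bigr _ (fun i _ => card_sum i)) exchange_big /=.
apply: (@leq_trans (\sum_(p : n.-tuple bool) 1)); last first.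
  by rewrite sum1_card card_tuple card_bool.
apply: leq_sum => p _.
rewrite -big_mkcond sum1dep_card /=; apply/card_le1_eqP => i i'.
rewrite !inE => /existsP[j p_E] /existsP[j' p_E']; apply/eqP/negPn/negP => neq_ii'.
have /distinguishableP[t sep_t] := @E_user1 (i', j') (i, j) neq_ii'.
have /andP[nz' nz] := G1_separated_nonzero sep_t.
move: (in_cubeP p_E t) (in_cubeP p_E' t).
rewrite (negbTE nz) (negbTE nz') => /eqP eq_t /eqP eq_t'.
by move: sep_t; rewrite eq_t eq_t' /separated eqxx.
Qed.

End CodeRows.

Lemma feasible_vec_m1_le (G2 : rel 'I_3) n m1 m2 :
  feasible_vec G1_star G2 n m1 m2 -> (m1 <= 2 ^ n)%N.
Proof.
move=> [_ [m2_gt0 [E E_sep]]]; pose j0 := Ordinal m2_gt0.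
rewrite -[m1]card_ord; apply: (@card_le_letter_pattern _ _ _ sigma2 (fun i => E (i, j0))).
move=> i i' neq_ii'.
have /distinguishableP[t sep_t] := (E_sep (i, j0) (i', j0)).1 neq_ii'.
by exists t; apply: G1_separated_pattern sep_t.
Qed.

(* For [q != sigma0] the whole code is injective on the pattern of [q]; for
   [q = sigma0] each row is injective on zero patterns. *)
Lemma feasible_vec_mul_le (G2 : rel 'I_3) q n m1 m2 :
  (forall x y, separated G2 x y -> (x == q) != (y == q)) ->
  feasible_vec G1_star G2 n m1 m2 -> (m1 * m2 <= 2 ^ n)%N.
Proof.
move=> G2_q [_ [_ [E E_sep]]].
have E1 a a' := (E_sep a a').1; have E2 a a' := (E_sep a a').2.
have [q0|q_nz] := eqVneq q sigma0.
  apply: leq_trans (sum_card_row_cubes E1).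
  rewrite -[m1 in (m1 * _)%N]card_ord -sum_nat_const; apply: leq_sum => i _.
  rewrite -[X in (X <= _)%N](card_code_row E2 i).
  apply: card_le_cube_interior (code_row_sub_cube_interior E i) _.
  move=> _ _ /imsetP[j _ ->] /imsetP[j' _ ->] eq_zp; congr E; congr pair.
  apply/eqP/negPn/negP => /(@E2 (i, j) (i, j')) /distinguishableP[t sep_t].
  have := G2_q _ _ sep_t; rewrite q0.
  by have := congr1 (fun v => tnth v t) eq_zp; rewrite !tnth_map => ->; rewrite eqxx.
rewrite -[m1]card_ord -[m2]card_ord -card_prod.
apply: (@card_le_letter_pattern _ _ _ q E) => a a' neq_aa'.
have [eq1|neq1] := eqVneq a.1 a'.1.
  have neq2 : a.2 != a'.2.
    by apply: contraNneq neq_aa'; case: a a' eq1 => [i j] [i' j'] /= -> ->.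
  have /distinguishableP[t sep_t] := E2 _ _ neq2.
  by exists t; apply: G2_q.
have /distinguishableP[t sep_t] := E1 _ _ neq1.
by exists t; apply: G1_separated_pattern sep_t.
Qed.

Lemma feasible_vec_complete (G2 : rel 'I_3) n m1 m2 :
  (forall x y, x != y -> G2 x y) -> feasible_vec G1_star G2 n m1 m2 -> m2 = 1%N.
Proof.
move=> G2_complete [m1_gt0 [m2_gt0 [E E_sep]]].
apply/eqP; rewrite eqn_leq m2_gt0 andbT leqNgt; apply/negP => m2_gt1.
have /distinguishableP[t /andP[neq_t]] :=
  (E_sep (Ordinal m1_gt0, Ordinal m2_gt0) (Ordinal m1_gt0, Ordinal m2_gt1)).2 isT.
by rewrite G2_complete.
Qed.

Section Log2.
Variable R : realType.

Lemma ln2_gt0 : 0 < ln (2 : R).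
Proof. by apply: ln_gt0; rewrite ltr1n. Qed.

Lemma log2_nat2 : log2 (2%:R : R) = 1.
Proof. by rewrite /log2 divff // gt_eqF // ln2_gt0. Qed.

Lemma log2_nat1 : log2 (1%:R : R) = 0.
Proof. by rewrite /log2 ln1 mul0r. Qed.

Lemma log2_nat_ge0 m : (0 < m)%N -> 0 <= log2 (m%:R : R).
Proof. by move=> m_gt0; rewrite divr_ge0 ?ln_ge0 ?ler1n // ltW // ln2_gt0. Qed.

Lemma log2_natM m k : (0 < m)%N -> (0 < k)%N ->
  log2 ((m * k)%:R : R) = log2 (m%:R : R) + log2 (k%:R : R).
Proof. by move=> m_gt0 k_gt0; rewrite /log2 natrM lnM ?posrE ?ltr0n // mulrDl. Qed.

Lemma log2_natX k n : (0 < k)%N -> log2 ((k ^ n)%:R : R) = n%:R * log2 (k%:R : R).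
Proof. by move=> k_gt0; rewrite /log2 natrX lnXn ?ltr0n // mulr_natl mulrnAl. Qed.

Lemma log2_nat_le m n : (0 < m)%N -> (m <= 2 ^ n)%N -> log2 (m%:R : R) <= n%:R.
Proof.
move=> m_gt0 le_m; rewrite ler_pdivrMr ?ln2_gt0 // mulr_natl -lnXn //.
by rewrite ler_ln ?posrE ?ltr0n ?exprn_gt0 // -natrX ler_nat.
Qed.

Lemma log2_nat3_ge1 : 1 <= log2 (3%:R : R).
Proof. by rewrite ler_pdivlMr ?ln2_gt0 // mul1r ler_ln ?posrE // ler_nat. Qed.

Lemma powR2_log2 x : 0 < x -> (2 : R) `^ log2 x = x.
Proof.
move=> x_gt0; rewrite /powR gt_eqF // /log2 divfK ?lnK ?posrE //.
by rewrite gt_eqF // ln2_gt0.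
Qed.

End Log2.

Section CubeInteriorBound.
Variable R : realType.
Local Notation c := (log2 (3%:R : R)).

Lemma powR_convex (p x y t : R) : 1 <= p -> 0 <= x -> 0 <= y -> 0 <= t <= 1 ->
  (t * x + (1 - t) * y) `^ p <= t * x `^ p + (1 - t) * y `^ p.
Proof.
move=> p_ge1 x_ge0 y_ge0 /andP[t_ge0 t_le1].
have := @convex_powR R p p_ge1 (Itv01 t_ge0 t_le1) x y; rewrite !convRE /=.
by apply; rewrite inE /= in_itv /= ?x_ge0 ?y_ge0.
Qed.

(* Convexity of [x `^ c] between [s / 2] and [s = x + y]; the exponent
   [c = log2 3] is exactly the one for which [(s / 2) `^ c = s `^ c / 3]. *)
Lemma powR_log3_add (x y z : R) : 0 <= x -> 0 <= y ->
  z <= x `^ c -> z <= y `^ c -> x `^ c + y `^ c + z <= (x + y) `^ c.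
Proof.
wlog le_yx : x y / y <= x => [hwlog x_ge0 y_ge0 zx zy|x_ge0 y_ge0 _ zy].
  have [/ltW le_xy|le_yx] := ltP x y; last exact: hwlog.
  by rewrite (addrC (x `^ c)) (addrC x); apply: hwlog.
apply: le_trans (_ : x `^ c + y `^ c + y `^ c <= _); first by lra.
have c_ge1 := @log2_nat3_ge1 R; set s := x + y.
have [y0|y_neq0] := eqVneq y 0.
  by rewrite /s y0 addr0 powR0 ?gt_eqF ?(lt_le_trans ltr01) // !addr0.
have y_gt0 : 0 < y by rewrite lt0r y_neq0.
have s_gt0 : 0 < s by rewrite /s; lra.
pose t := 2 * y / s.
have t01 : 0 <= t <= 1.
  by rewrite /t divr_ge0 ?mulr_ge0 ?(ltW s_gt0) //= ler_pdivrMr // mul1r /s; lra.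
have half_ge0 : 0 <= s / 2 by rewrite divr_ge0 ?ltW.
have := powR_convex c_ge1 half_ge0 (ltW s_gt0) t01.
have := powR_convex c_ge1 half_ge0 (lexx 0) t01.
have -> : t * (s / 2) + (1 - t) * s = x by rewrite /t /s; field; rewrite -/s gt_eqF.
have -> : t * (s / 2) + (1 - t) * 0 = y by rewrite /t /s; field; rewrite -/s gt_eqF.
have -> : (s / 2) `^ c = s `^ c / 3%:R.
  rewrite powRM ?(ltW s_gt0) ?invr_ge0 // -powR_inv1 // -powRrM mulN1r powRN.
  by rewrite powR2_log2 ?ltr0n.
by rewrite powR0 ?gt_eqF ?(lt_le_trans ltr01) //; nra.
Qed.

Lemma card_cube_interior_le n (U : {set n.-tuple bool}) :
  (#|cube_interior U|%:R : R) <= #|U|%:R `^ c.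
Proof.
elim: n U => [|n IHn] U.
  have [U0|[p pU]] := set_0Vmem U.
    rewrite (@eq_card0 _ (cube_interior U)) ?powR_ge0 // => w.
    rewrite inE (tuple0 w); apply/negP => /forallP/(_ [tuple])/implyP/(_ isT).
    by rewrite U0 inE.
  have -> : #|U| = 1%N.
    apply/eqP; rewrite eqn_leq (leq_trans (max_card _)) ?card_tuple //=.
    by apply/card_gt0P; exists p.
  by rewrite powR1 lern1 (leq_trans (max_card _)) ?card_tuple.
have W_le x b : (x == sigma0) || (x == letter b) ->
    (#|slice x (cube_interior U)|%:R : R) <= #|slice b U|%:R `^ c.
  move=> x_b; apply: le_trans (IHn _); rewrite ler_nat subset_leq_card //.
  exact: slice_sub_cube_interior (subxx _) x_b.
rewrite (card_slices (cube_interior U)) (card_slices U) sum_ord3 big_bool !natrD.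
have := powR_log3_add (ler0n _ _) (ler0n _ _)
  (W_le sigma0 true isT) (W_le sigma0 false isT).
have := W_le sigma1 false isT; have := W_le sigma2 true isT.
lra.
Qed.

End CubeInteriorBound.

Local Open Scope classical_set_scope.

Section RateTradeoff.
Variable R : realType.

(* The finite-length form of the region [c * R1 + R2 <= c]. *)
Definition rate_tradeoff (G2 : rel 'I_3) (c : R) : Prop :=
  forall n m1 m2, feasible_vec G1_star G2 n m1 m2 ->
    c * log2 (m1%:R : R) + log2 (m2%:R : R) <= n%:R * c.

Lemma log2_bound_of_rows (c : R) n m1 m2 (u : 'I_m1 -> nat) :
  0 < c -> (0 < m1)%N -> (0 < m2)%N ->
  (forall i, (m2%:R : R) <= (u i)%:R `^ c) -> (\sum_i u i <= 2 ^ n)%N ->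
  c * log2 (m1%:R : R) + log2 (m2%:R : R) <= n%:R * c.
Proof.
move=> c_gt0 m1_gt0 m2_gt0 row_le sum_le.
have row_root i : (m2%:R : R) `^ c^-1 <= (u i)%:R.
  have c_inv_ge0 : 0 <= c^-1 by rewrite invr_ge0 ltW.
  have := ge0_ler_powR c_inv_ge0 _ _ (row_le i).
  by rewrite -powRrM mulfV ?gt_eqF // powRr1 //; apply; rewrite nnegrE ?powR_ge0.
have prod_le : m1%:R * (m2%:R : R) `^ c^-1 <= (2 ^ n)%:R.
  apply: le_trans (_ : \sum_i ((u i)%:R : R) <= _); last by rewrite -natr_sum ler_nat.
  have -> : m1%:R * (m2%:R : R) `^ c^-1 = \sum_(i < m1) (m2%:R : R) `^ c^-1.
    by rewrite sumr_const card_ord mulr_natl.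
  by apply: ler_sum => i _; exact: row_root.
move: prod_le; rewrite -ler_ln ?posrE ?mulr_gt0 ?powR_gt0 ?ltr0n ?expn_gt0 //.
rewrite lnM ?posrE ?powR_gt0 ?ltr0n // ln_powR natrX lnXn // -[ln 2 *+ n]mulr_natl.
move=> /(ler_wpM2l (ltW c_gt0)); rewrite mulrDr mulrA mulfV ?gt_eqF // mul1r => h.
rewrite /log2 mulrA -mulrDl ler_pdivrMr ?ln2_gt0 //.
by apply: le_trans h _; rewrite mulrA (mulrC c).
Qed.

Lemma rate_tradeoff_log3 (G2 : rel 'I_3) : rate_tradeoff G2 (log2 (3%:R : R)).
Proof.
move=> n m1 m2 [m1_gt0 [m2_gt0 [E E_sep]]].
have E1 a a' := (E_sep a a').1; have E2 a a' := (E_sep a a').2.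
apply: log2_bound_of_rows (lt_le_trans ltr01 (log2_nat3_ge1 R)) m1_gt0 m2_gt0 _
  (sum_card_row_cubes E1) => i.
apply: le_trans (card_cube_interior_le R _).
rewrite -[m2 in m2%:R](card_code_row E2 i) ler_nat.
exact/subset_leq_card/code_row_sub_cube_interior.
Qed.

Lemma rate_tradeoff_complete (G2 : rel 'I_3) :
  (forall x y, x != y -> G2 x y) -> rate_tradeoff G2 (0 : R).
Proof.
move=> G2_complete n m1 m2 feas.
by rewrite (feasible_vec_complete G2_complete feas) log2_nat1 !mul0r mulr0 addr0.
Qed.

Lemma rate_tradeoff_star (G2 : rel 'I_3) q :
  (forall x y, separated G2 x y -> (x == q) != (y == q)) -> rate_tradeoff G2 (1 : R).
Proof.
move=> G2_q n m1 m2 feas; have [m1_gt0 [m2_gt0 _]] := feas.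
rewrite mul1r mulr1 -log2_natM // log2_nat_le ?muln_gt0 ?m1_gt0 //.
exact: feasible_vec_mul_le G2_q feas.
Qed.

Lemma feasible_rate_converse (G2 : rel 'I_3) (c : R) : rate_tradeoff G2 c ->
  forall R1 R2, feasible_rate G1_star G2 R1 R2 ->
  exists2 a : R, 0 <= a <= 1 & R1 <= a /\ R2 <= (1 - a) * c.
Proof.
move=> tradeoff R1 R2 [m1 [m2 [feas [cvg1 cvg2]]]].
have R1_ge0 : 0 <= R1.
  apply: (ler_cvg_to (cvg_cst 0) cvg1); near=> n.
  by rewrite divr_ge0 ?log2_nat_ge0 //; case: (feas n).
have R1_le1 : R1 <= 1.
  apply: (cvgr_to_le cvg1); near=> n.
  have n_gt0 : (0 < n)%N by near: n; exists 1%N.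
  rewrite ler_pdivrMr ?ltr0n // mul1r.
  by apply: log2_nat_le (feasible_vec_m1_le (feas n)); case: (feas n).
have : c * R1 + R2 <= c.
  have cvg_sum : (fun n => c * (log2 ((m1 n)%:R : R) / n%:R)
      + log2 ((m2 n)%:R : R) / n%:R) @ \oo --> c * R1 + R2.
    by apply: cvgD => //; exact: cvgMl_tmp.
  apply: (cvgr_to_le cvg_sum); near=> n.
  have n_gt0 : (0 < n)%N by near: n; exists 1%N.
  rewrite mulrA -mulrDl ler_pdivrMr ?ltr0n // [X in _ <= X]mulrC.
  exact: tradeoff (feas n).
by exists R1; [rewrite R1_ge0 R1_le1 | split => //; lra].
Unshelve. all: by end_near.
Qed.

End RateTradeoff.

Lemma cvg_truncn_mul_div (R : realType) (a : R) : 0 <= a ->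
  (fun n : nat => (Num.trunc (a * n%:R))%:R / n%:R) @ \oo --> a.
Proof.
move=> a_ge0.
apply: (@squeeze_cvgr _ _ _ _ (fun n => a - 2 * harmonic n) (fun=> a)).
- near=> n.
  have n_gt0 : (0 < n)%N by near: n; exists 1%N.
  have an_ge0 : 0 <= a * n%:R by rewrite mulr_ge0.
  have /andP[trunc_le lt_trunc] := truncn_itv an_ge0.
  apply/andP; split; last by rewrite ler_pdivrMr ?ltr0n.
  rewrite ler_pdivlMr ?ltr0n //.
  have n_harmonic : (n%:R + 1) * harmonic n = 1 :> R.
    by rewrite /= -natr1 mulfV // -natr1 pnatr_eq0.
  have n_ge1 : 1 <= n%:R :> R by rewrite ler1n.
  have : 0 <= harmonic n * (n%:R - 1) :> R.
    by rewrite mulr_ge0 ?harmonic_ge0 // subr_ge0.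
  rewrite -natr1 in lt_trunc; nra.
- rewrite -[X in _ --> X]subr0; apply: cvgB; first exact: cvg_cst.
  by rewrite -[X in _ --> X](mulr0 2); apply: cvgMl_tmp; exact: cvg_harmonic.
- exact: cvg_cst.
Unshelve. all: by end_near.
Qed.

Section TimeSharing.
Variables (T K1 K2 : finType) (G1 G2 : rel T) (iota1 : K1 -> T) (iota2 : K2 -> T).
Hypothesis iota1_indep : forall i j, i != j -> separated G1 (iota1 i) (iota1 j).
Hypothesis iota2_indep : forall i j, i != j -> separated G2 (iota2 i) (iota2 j).
Hypotheses (K1_gt0 : (0 < #|K1|)%N) (K2_gt0 : (0 < #|K2|)%N).

Lemma feasible_vec_time_sharing k l :
  feasible_vec G1 G2 (k + l) #|{: k.-tuple K1}| #|{: l.-tuple K2}|.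
Proof.
split; first by rewrite card_tuple expn_gt0 K1_gt0.
split; first by rewrite card_tuple expn_gt0 K2_gt0.
exists (fun a =>
  [tuple of map_tuple iota1 (enum_val a.1) ++ map_tuple iota2 (enum_val a.2)]).
move=> a a'; split => neq_aa'.
  have : enum_val a.1 != enum_val a'.1 by rewrite (inj_eq enum_val_inj).
  rewrite eqEtuple negb_forall => /existsP[t neq_t].
  apply/distinguishableP; exists (lshift l t).
  by rewrite !tnth_lshift !tnth_map; apply: iota1_indep.
have : enum_val a.2 != enum_val a'.2 by rewrite (inj_eq enum_val_inj).
rewrite eqEtuple negb_forall => /existsP[t neq_t].
apply/distinguishableP; exists (rshift k t).
by rewrite !tnth_rshift !tnth_map; apply: iota2_indep.
Qed.

Variable R : realType.

Lemma feasible_rate_time_sharing (a : R) : 0 <= a <= 1 ->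
  feasible_rate G1 G2 (a * log2 (#|K1|%:R : R)) ((1 - a) * log2 (#|K2|%:R : R)).
Proof.
move=> /andP[a_ge0 a_le1]; pose k n := Num.trunc (a * n%:R).
have k_le n : (k n <= n)%N.
  rewrite -(ler_nat R); apply: le_trans (_ : a * n%:R <= _).
    by rewrite truncn_le mulr_ge0.
  by rewrite ler_piMl.
exists (fun n => #|{: (k n).-tuple K1}|), (fun n => #|{: (n - k n).-tuple K2}|).
split; [|split].
- by move=> n; have := feasible_vec_time_sharing (k n) (n - k n); rewrite subnKC.
- under eq_fun => n do rewrite card_tuple log2_natX // mulrAC.
  by apply: cvgMr_tmp; exact: cvg_truncn_mul_div.
- under eq_fun => n do rewrite card_tuple log2_natX // natrB // mulrAC mulrBl.
  apply: cvgMr_tmp; apply: cvgB; last exact: cvg_truncn_mul_div.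
  apply: cvg_near_cst; near=> n.
  have n_gt0 : (0 < n)%N by near: n; exists 1%N.
  by rewrite divff // pnatr_eq0 -lt0n.
Unshelve. all: by end_near.
Qed.

End TimeSharing.

Lemma simple_graph3_cases (G : rel 'I_3) : simple_graph G ->
  [\/ forall x y, x != y -> G x y,
      forall x y, ~~ G x y
    | exists q z, separated G q z /\
        forall x y, separated G x y -> (x == q) != (y == q)].
Proof.
move=> [G_sym G_irr]; have G_xx x : G x x = false := G_irr x.
have G10 := G_sym sigma1 sigma0; have G20 := G_sym sigma2 sigma0.
have G21 := G_sym sigma2 sigma1.
(* The branches run over the values of [(G s0 s1, G s0 s2, G s1 s2)] from
   all true to all false; [q] is an end of every non-edge and [qz] one of them. *)
case e01 : (G sigma0 sigma1); case e02 : (G sigma0 sigma2); case e12 : (G sigma1 sigma2);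
  [ apply: Or31 | apply: Or33; exists sigma1, sigma2
  | apply: Or33; exists sigma0, sigma2 | apply: Or33; exists sigma2, sigma0
  | apply: Or33; exists sigma0, sigma1 | apply: Or33; exists sigma1, sigma0
  | apply: Or33; exists sigma0, sigma1 | apply: Or32 ];
  rewrite /separated; try split;
  try (move=> x y; case: (ord3P x) => ->; case: (ord3P y) => ->);
  by rewrite ?G_xx ?G10 ?G20 ?G21 ?e01 ?e02 ?e12.
Qed.

Lemma simple_graph3_cover (R : realType) (G2 : rel 'I_3) : simple_graph G2 ->
  exists (K : finType) (kappa : 'I_3 -> K) (iota : K -> 'I_3),
    [/\ forall x y, kappa x = kappa y -> x = y \/ G2 x y,
        forall i j, i != j -> separated G2 (iota i) (iota j)
      & rate_tradeoff G2 (log2 (#|K|%:R : R))].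
Proof.
move=> G2_simple; case: (simple_graph3_cases G2_simple).
- move=> G2_complete; exists unit, (fun=> tt), (fun=> sigma0); split => //.
  + by move=> x y _; have [|/G2_complete] := eqVneq x y; [left | right].
  + by rewrite card_unit log2_nat1; exact: rate_tradeoff_complete.
- move=> G2_empty; exists 'I_3, id, id; split => //.
  + by move=> x y; left.
  + by move=> i j neq_ij; rewrite /separated neq_ij G2_empty.
  + by rewrite card_ord; exact: rate_tradeoff_log3.
move=> [q [z [sep_qz G2_q]]].
exists bool, (eq_op^~ q), (fun b => if b then q else z); split.
- move=> x y eq_q; have [-> | neq_xy] := eqVneq x y; [by left | right].
  apply/negPn/negP => nG; have := G2_q x y.
  by rewrite /separated neq_xy nG eq_q eqxx => /(_ isT).
- by case; case => //= _; rewrite (separatedC G2_simple.1).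
- by rewrite card_bool log2_nat2; exact: rate_tradeoff_star G2_q.
Qed.

Theorem proposition15 (R : realType) (G2 : rel 'I_3) :
  simple_graph G2 ->
  [/\ log2 (shannon_capacity R G1_star) = 1,
      (forall a : R, 0 <= a <= 1 ->
         feasible_rate G1_star G2
           (a * log2 (shannon_capacity R G1_star))
           ((1 - a) * log2 (shannon_capacity R G2)))
    & (forall R1 R2 : R, feasible_rate G1_star G2 R1 R2 ->
         exists2 a : R, 0 <= a <= 1 &
           R1 <= a /\ R2 <= (1 - a) * log2 (shannon_capacity R G2))].
Proof.
move=> /(simple_graph3_cover R)[K [kappa [iota [cover indep tradeoff]]]].
have K_gt0 : (0 < #|K|)%N by apply/card_gt0P; exists (kappa sigma0).
have bool_gt0 : (0 < #|{: bool}|)%N by rewrite card_bool.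
rewrite (shannon_capacity_clique_cover G1_clique_cover letter_separated R bool_gt0).
rewrite (shannon_capacity_clique_cover cover indep R K_gt0) card_bool log2_nat2.
split => // [a a01 | ]; last exact: feasible_rate_converse tradeoff.
have := feasible_rate_time_sharing letter_separated indep bool_gt0 K_gt0 a01.
by rewrite card_bool log2_nat2 mulr1.
Qed.
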